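(* For every $d\ge3$, the functions $C_{-1}(u_1,\dots,u_d)=\phi_{-1}^{-1}(\phi_{-1}(u_1)+\cdots+\phi_{-1}(u_d))$ and $C_{-2}(u_1,\dots,u_d)=\phi_{-2}^{-1}(\phi_{-2}(u_1)+\cdots+\phi_{-2}(u_d))$, $u_1,\dots,u_d\in[0,1]$, are valid $d$-dimensional copulas.
   Context: $\phi_{-1}(x)=x-1-\log x$ and $\phi_{-2}(x)=\frac12(x^{-1}+x-2)$ for $x>0$, with $\phi_{-1}(0)=\phi_{-2}(0)=\infty$; each is a strictly decreasing bijection from $[0,1]$ onto $[0,\infty]$, and $\phi_\lambda^{-1}$ denotes its inverse (with $\phi_\lambda^{-1}(\infty)=0$). Explicitly, $\phi_{-1}^{-1}(t)=-\mathfrak{W}_0(-e^{-(t+1)})$ with $\mathfrak{W}_0$ the principal branch of the Lambert W function, and $\phi_{-2}^{-1}(t)=t+1-\sqrt{(t+1)^2-1}$. A $d$-dimensional copula is a joint CDF on $[0,1]^d$ with uniform $[0,1]$ margins. *)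

From HB Require Import structures.
From mathcomp Require Import all_boot all_order all_algebra.
From mathcomp Require Import all_classical all_reals all_analysis.
Set Implicit Arguments. Unset Strict Implicit. Unset Printing Implicit Defensive.
Import Order.TTheory GRing.Theory Num.Theory.
Local Open Scope ring_scope.

Definition phi_m1 {R : realType} (x : R) : \bar R :=
  if x == 0 then +oo%E else (x - 1 - ln x)%:E.

Definition phi_m2 {R : realType} (x : R) : \bar R :=
  if x == 0 then +oo%E else ((x^-1 + x - 2) / 2)%:E.

Definition phi_inv {R : realType} (phi : R -> \bar R) (t : \bar R) : R :=
  xget 0 [set x : R | 0 <= x <= 1 /\ phi x = t].

Definition archC {R : realType} (phi : R -> \bar R) (d : nat)
    (u : 'I_d -> R) : R :=
  phi_inv phi (\sum_(i < d) phi (u i))%E.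

Definition in_unit_cube {R : realType} (d : nat) (u : 'I_d -> R) : Prop :=
  forall i, 0 <= u i <= 1.

Definition cvolume {R : realType} (d : nat) (C : ('I_d -> R) -> R)
    (a b : 'I_d -> R) : R :=
  \sum_(S : {set 'I_d}) (-1) ^+ (d - #|S|) * C (fun i => if i \in S then b i else a i).

Definition is_copula {R : realType} (d : nat) (C : ('I_d -> R) -> R) : Prop :=
  [/\ (forall u, in_unit_cube u -> (exists i, u i = 0) -> C u = 0),
      (forall u i, in_unit_cube u -> (forall j, j != i -> u j = 1) -> C u = u i)
    & (forall a b, in_unit_cube a -> in_unit_cube b -> (forall i, a i <= b i) ->
         0 <= cvolume C a b)].

From mathcomp Require Import all_boot all_order all_algebra.
From mathcomp Require Import all_classical all_reals all_analysis.
From mathcomp Require Import ring lra zify.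
Set Implicit Arguments. Unset Strict Implicit. Unset Printing Implicit Defensive.
Import Order.TTheory GRing.Theory Num.Theory.
Import numFieldNormedType.Exports.
Local Open Scope classical_set_scope.
Local Open Scope ring_scope.

(* If the inverse psi of an Archimedean generator phi is completely monotone on
   [0, +oo), then C(u) = psi (phi u_1 + ... + phi u_d) is a copula: in the
   coordinates t_i = phi u_i a box becomes a translate of [0, h_1] x ... x [0, h_d]
   (with h_i = +oo when a_i = 0, where psi vanishes), and its C-volume is the
   iterated difference of psi with steps h_i, which has the sign of
   (-1)^d psi^(d) >= 0.  Complete monotonicity of psi follows from the equation
   psi' = - G o psi, where G = -1/phi' is absolutely monotone on (0, 1):
   G x = x / (1 - x) for phi_{-1} and G x = 2 x^2 / (1 - x^2) for phi_{-2}. *)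

Section SignedMonotone.
Variable R : realType.
Implicit Types (D E : R -> Prop) (s : R) (f g h : R -> R).

(* [signed_monotone D s n f]: on [D], the derivatives f^(k), k <= n, exist and
   satisfy s^k f^(k) >= 0; s = 1 is absolute, s = -1 complete monotonicity. *)
Fixpoint signed_monotone D s n f : Prop :=
  (forall x, D x -> 0 <= f x) /\
  if n is n'.+1 then
    exists2 df : R -> R, (forall x, D x -> is_derive x 1 f (df x)) &
      signed_monotone D s n' (fun x => s * df x)
  else True.

Lemma signed_monotone_ge0 D s n f x : signed_monotone D s n f -> D x -> 0 <= f x.
Proof. by case: n => [[f0 _]|n [f0 _]]; apply: f0. Qed.

Lemma signed_monotoneW D s n f : signed_monotone D s n.+1 f -> signed_monotone D s n f.
Proof.
elim: n f => [|n IH] f [f0 [df f' Mdf]]; first by [].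
by split=> //; exists df => //; apply: IH.
Qed.

Lemma signed_monotone_le D s m n f :
  (m <= n)%N -> signed_monotone D s n f -> signed_monotone D s m f.
Proof.
move=> /subnK <-; elim: (n - m)%N => [|k IH] //= Mf.
exact/IH/signed_monotoneW.
Qed.

Lemma signed_monotone_cst D s n (c : R) : 0 <= c -> signed_monotone D s n (fun=> c).
Proof.
elim: n c => [|n IH] c c0; split => //; exists (fun=> 0) => [x _|]; first exact: is_derive_cst.
by under eq_fun do rewrite mulr0; exact: IH.
Qed.

Lemma signed_monotone_id D n :
  (forall x, D x -> 0 <= x) -> signed_monotone D 1 n id.
Proof.
case: n => [|n] D0; split => //; exists (fun=> 1) => [x _|]; first exact: is_derive_id.
by apply: signed_monotone_cst; rewrite mulr1.
Qed.

Lemma signed_monotoneD D s n f g : signed_monotone D s n f ->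
  signed_monotone D s n g -> signed_monotone D s n (fun x => f x + g x).
Proof.
elim: n f g => [|n IH] f g [f0 Mf] [g0 Mg].
  by split=> // x Dx; rewrite addr_ge0 ?f0 ?g0.
split=> [x Dx|]; first by rewrite addr_ge0 ?f0 ?g0.
case: Mf Mg => [df f' Mdf] [dg g' Mdg].
exists (fun x => df x + dg x) => [x Dx|]; first exact: is_deriveD (f' x Dx) (g' x Dx).
by under eq_fun do rewrite mulrDr; exact: IH.
Qed.

Lemma signed_monotoneM D s n f g : signed_monotone D s n f ->
  signed_monotone D s n g -> signed_monotone D s n (fun x => f x * g x).
Proof.
elim: n f g => [|n IH] f g Mf Mg.
  by split=> // x Dx; rewrite mulr_ge0 ?(signed_monotone_ge0 Mf) ?(signed_monotone_ge0 Mg).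
split=> [x Dx|]; first by rewrite mulr_ge0 ?(signed_monotone_ge0 Mf) ?(signed_monotone_ge0 Mg).
have Mf' := signed_monotoneW Mf; have Mg' := signed_monotoneW Mg.
case: Mf Mg => [_ [df f' Mdf]] [_ [dg g' Mdg]].
exists (fun x => f x * dg x + g x * df x) => [x Dx|].
  exact: is_deriveM (f' x Dx) (g' x Dx).
have -> : (fun x => s * (f x * dg x + g x * df x)) =
          (fun x => s * df x * g x + f x * (s * dg x)).
  by apply: funext => x; ring.
by apply: signed_monotoneD; apply: IH.
Qed.

Lemma signed_monotone_comp D E s n g h : (forall x, D x -> E (h x)) ->
  signed_monotone E 1 n g -> signed_monotone D s n h ->
  signed_monotone D s n (fun x => g (h x)).
Proof.
elim: n g h => [|n IH] g h DE Mg Mh.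
  by split=> // x Dx; apply: (signed_monotone_ge0 Mg); apply: DE.
split=> [x Dx|]; first by apply: (signed_monotone_ge0 Mg); apply: DE.
have Mh' := signed_monotoneW Mh.
case: Mg Mh => [_ [dg g' Mdg]] [_ [dh h' Mdh]].
exists (fun x => dg (h x) * dh x) => [x Dx|].
  exact: is_derive1_comp (g' _ (DE _ Dx)) (h' _ Dx).
have -> : (fun x => s * (dg (h x) * dh x)) = (fun x => 1 * dg (h x) * (s * dh x)).
  by apply: funext => x; ring.
by apply: signed_monotoneM Mdh; apply: (IH (fun y => 1 * dg y)).
Qed.

End SignedMonotone.

Section CompletelyMonotone.
Variable R : realType.
Implicit Types (f : R -> R) (x y h : R).

Lemma is_derive_continuous f x (df : R) : is_derive x 1 f df -> {for x, continuous f}.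
Proof. by case=> fx _; apply/differentiable_continuous/derivable1_diffP. Qed.

Lemma is_derive_shift f x h (df : R) :
  is_derive (x + h) 1 f df -> is_derive x 1 (fun y => f (y + h)) df.
Proof.
move=> fxh; have shift_h : is_derive x 1 (fun y => y + h) (1 + 0).
  exact: is_deriveD (is_derive_id x 1) (is_derive_cst h x 1).
by have := @is_derive1_comp R f (fun y => y + h) x _ _ fxh shift_h; rewrite addr0 mulr1.
Qed.

Lemma cmonotone1_le f x y :
  signed_monotone (fun x => 0 < x) (-1) 1 f -> 0 < x -> x <= y -> f y <= f x.
Proof.
move=> [_ [df f' [df_le0 _]]] x0 xy.
apply: (@ler0_derive1_le_oo R f 0 (y + 1)) => //.
- by move=> z; rewrite in_itv/= => /andP[z0 _]; case: (f' z z0).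
- move=> z; rewrite in_itv/= => /andP[z0 _]; rewrite derive1E.
  by case: (f' z z0) => _ ->; rewrite -oppr_ge0 -mulN1r df_le0.
- by move=> z; rewrite inE/= in_itv/= => /andP[z0 _]; exact: is_derive_continuous (f' z z0).
- by rewrite in_itv/= (lt_le_trans x0 xy) ltrDl ltr01.
- by rewrite in_itv/= x0 (le_lt_trans xy) // ltrDl ltr01.
Qed.

Lemma cmonotone_diff n f h : 0 <= h ->
  signed_monotone (fun x => 0 < x) (-1) n.+1 f ->
  signed_monotone (fun x => 0 < x) (-1) n (fun x => f x - f (x + h)).
Proof.
move=> h0; elim: n f => [|n IH] f Mf.
  by split=> // x x0; rewrite subr_ge0 (cmonotone1_le Mf x0) // lerDl.
split=> [x x0|].
  by rewrite subr_ge0 (cmonotone1_le (signed_monotone_le (ltn0Sn _) Mf) x0) // lerDl.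
case: Mf => [_ [df f' Mdf]].
exists (fun x => df x - df (x + h)) => [x x0|].
  apply: is_deriveB (f' x x0) (is_derive_shift (f' _ _)).
  by rewrite ltr_wpDr.
have -> : (fun x => -1 * (df x - df (x + h))) =
    (fun x => (fun y => -1 * df y) x - (fun y => -1 * df y) (x + h)).
  by apply: funext => x /=; ring.
exact: IH.
Qed.

Definition cmonotone n f :=
  [/\ signed_monotone (fun x => 0 < x) (-1) n f, 0 <= f 0 & f x @[x --> 0^'+] --> f 0].

Lemma cmonotone_ge0 n f x : cmonotone n f -> 0 <= x -> 0 <= f x.
Proof.
case=> Mf f0 _; rewrite le_eqVlt => /predU1P[<- //|x0].
exact: signed_monotone_ge0 Mf x0.
Qed.

Lemma cmonotoneW n f : cmonotone n.+1 f -> cmonotone n f.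
Proof. by case=> Mf f0 fc; split=> //; exact: signed_monotoneW. Qed.

Lemma cmonotone_shift_diff n f h : 0 <= h -> cmonotone n.+1 f ->
  cmonotone n (fun x => f x - f (x + h)).
Proof.
move=> h0 [Mf f0 fc]; rewrite le_eqVlt in h0; case/predU1P: h0 => [<-|h0].
  under eq_fun do rewrite addr0 subrr.
  by split; [exact: signed_monotone_cst | | exact: cvg_cst].
have fh_cont : (fun x => f (x + h)) @ 0^'+ --> f (0 + h).
  case: Mf => [_ [df f' _]]; apply: cvg_at_right_filter.
  by apply: is_derive_continuous (is_derive_shift (f' _ _)); rewrite add0r.
split; [exact: cmonotone_diff (ltW h0) Mf | | by rewrite add0r in fh_cont *; exact: cvgB].
rewrite add0r subr_ge0 -(cvg_lim _ fc) //; apply: limr_ge; first by apply/cvg_ex; exists (f 0).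
near=> x; apply: (cmonotone1_le (signed_monotone_le (ltn0Sn _) Mf)).
- by near: x; exact: nbhs_right_gt.
- by near: x; exact: nbhs_right_le.
Unshelve. all: by end_near.
Qed.

End CompletelyMonotone.

Section AlternatingSum.
Variables (R : realType) (d : nat).
Implicit Types (A B T : {set 'I_d}) (h : 'I_d -> R).

Lemma sum_subset_setU1 j A (F : {set 'I_d} -> R) : j \notin A ->
  \sum_(T : {set 'I_d} | T \subset j |: A) F T =
  \sum_(T : {set 'I_d} | T \subset A) (F T + F (j |: T)).
Proof.
move=> jA; rewrite big_split /= (bigID (fun T : {set 'I_d} => j \in T)) /= addrC.
congr (_ + _).
  apply: eq_bigl => T; apply/andP/idP => [[sTjA jT]|sTA].
    apply/fintype.subsetP => x xT; have := fintype.subsetP sTjA x xT.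
    by rewrite !inE => /predU1P[xj|//]; rewrite -xj xT in jT.
  split; first exact: fintype.subset_trans sTA (subsetU1 j A).
  by apply: contra jA; exact: fintype.subsetP.
rewrite (reindex_onto (fun T : {set 'I_d} => j |: T) (fun T => T :\ j)) /=; last first.
  by move=> T /andP[_ jT]; rewrite finset.setD1K.
apply: eq_bigl => T; apply/idP/idP => [/andP[/andP[sTjA _] /eqP TE]|sTA].
  apply/fintype.subsetP => x xT; have : x \in (j |: T) :\ j by rewrite TE.
  rewrite !inE => /andP[/negbTE xj _].
  by have := fintype.subsetP sTjA x; rewrite !inE xj; apply.
have jT : j \notin T by apply: contra jA; exact: fintype.subsetP.
by rewrite finset.setUS // setU11 setU1K // eqxx.
Qed.

(* Value of [f] at the vertex of the box reached by the steps [h i], [i \in T];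
   the indices in [B] carry an infinite step, at which [f] vanishes. *)
Definition box_vertex (f : R -> R) B h (z : R) T : R :=
  if [disjoint T & B]%B then f (z + \sum_(i in T) h i) else 0.

Lemma cmonotone_alternating_sum_ge0 (f : R -> R) A B h (z : R) :
  (forall i, 0 <= h i) -> 0 <= z -> cmonotone #|A| f ->
  0 <= \sum_(T : {set 'I_d} | T \subset A) (-1) ^+ #|T| * box_vertex f B h z T.
Proof.
move=> h0 z0; move En : #|A| => n; elim: n A f En => [|n IH] A f cA Mf.
  rewrite (eq_bigl (pred1 finset.set0)) => [|T]; last by rewrite (cards0_eq cA) finset.subset0.
  rewrite big_pred1_eq cards0 expr0 mul1r /box_vertex big_set0 addr0.
  by case: ifP => // _; exact: cmonotone_ge0 Mf z0.
have /set0Pn[j jA] : A != finset.set0 by rewrite -card_gt0 cA.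
have cAj : #|A :\ j| = n by move: cA; rewrite (cardsD1 j) jA add1n => -[].
have jT T : T \subset A :\ j -> j \notin T.
  by move=> sT; apply/negP => /(fintype.subsetP sT); rewrite setD11.
have disjU1 T : [disjoint j |: T & B]%B = (j \notin B) && [disjoint T & B]%B.
  by rewrite -!setI_eq0 finset.setIUl finset.setU_eq0 setI_eq0 disjoints1 setI_eq0.
rewrite -(finset.setD1K jA) sum_subset_setU1 ?setD11 //.
case jB : (j \in B).
  under eq_bigr => T _ do rewrite {2}/box_vertex disjU1 jB mulr0 addr0.
  exact: IH (cmonotoneW Mf).
(* Splitting off the index [j] takes one finite difference of [f]. *)
rewrite (eq_bigr (fun T : {set 'I_d} =>
  (-1) ^+ #|T| * box_vertex (fun x => f x - f (x + h j)) B h z T)).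
  exact/IH/cmonotone_shift_diff.
move=> T sT; rewrite cardsU1 jT // add1n exprS /box_vertex disjU1 jB /=.
case: ifP => _; last by rewrite !mulr0 addr0.
rewrite big_setU1 ?jT //= (addrC (h j)) addrA.
ring.
Qed.

End AlternatingSum.

Section Generator.
Variables (R : realType) (phi : R -> \bar R) (p dp G : R -> R).
Hypothesis phi0 : phi 0 = +oo%E.
Hypothesis phiE : forall x : R, 0 < x -> phi x = (p x)%:E.
Hypothesis p1 : p 1 = 0.
Hypothesis p_derive : forall x : R, 0 < x -> is_derive x 1 p (dp x).
Hypothesis dp_lt0 : forall x : R, 0 < x < 1 -> dp x < 0.
Hypothesis p_unbounded : forall t : R, 0 <= t -> exists2 x : R, 0 < x <= 1 & t <= p x.
(* The inverse [psi] of [p] satisfies [psi' = - G \o psi]. *)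
Hypothesis GE : forall x : R, 0 < x < 1 -> G x = - (dp x)^-1.
Hypothesis G_abs_monotone : forall n, signed_monotone (fun x => 0 < x < 1) 1 n G.
Implicit Types (a b c x y t : R).

Lemma p_continuous a b : 0 < a -> {within `[a, b], continuous p}.
Proof.
move=> a0; apply: derivable_within_continuous => x; rewrite in_itv/= => /andP[ax _].
by case: (p_derive (lt_le_trans a0 ax)).
Qed.

Lemma p_decreasing x y : 0 < x -> x < y -> y <= 1 -> p y < p x.
Proof.
move=> x0 xy y1.
have p'xy c : c \in `]x, y[ -> is_derive c 1 p (dp c).
  by rewrite in_itv/= => /andP[xc _]; apply/p_derive/(lt_trans x0 xc).
have [c] := MVT xy p'xy (p_continuous (b := y) x0).
rewrite in_itv/= => /andP[xc cy] pyx; rewrite -subr_lt0 pyx pmulr_llt0 ?subr_gt0 // dp_lt0 //.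
by rewrite (lt_trans x0 xc) (lt_le_trans cy y1).
Qed.

Lemma p_ge0 x : 0 < x <= 1 -> 0 <= p x.
Proof.
case/andP=> x0; rewrite le_eqVlt => /predU1P[->|x1]; first by rewrite p1.
by rewrite -p1 ltW // p_decreasing.
Qed.

Lemma p_inj x y : 0 < x <= 1 -> 0 < y <= 1 -> p x = p y -> x = y.
Proof.
case/andP=> x0 x1 /andP[y0 y1] pxy; case: (ltgtP x y) => // [xy|yx].
  by have := p_decreasing x0 xy y1; rewrite pxy ltxx.
by have := p_decreasing y0 yx x1; rewrite pxy ltxx.
Qed.

Lemma phi_inv_oo : phi_inv phi +oo%E = 0.
Proof.
rewrite /phi_inv; case: xgetP => // x _ [/andP[x0 _] phix].
apply/eqP; rewrite eq_le x0 andbT leNgt; apply/negP => x_gt0.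
by move: phix; rewrite phiE.
Qed.

Definition psi t := phi_inv phi t%:E.

Lemma psiP t : 0 <= t -> 0 < psi t <= 1 /\ p (psi t) = t.
Proof.
move=> t0; have [x /andP[x0 x1] tpx] := p_unbounded t0.
have [c cI pc] : exists2 c, c \in `[x, 1] & p c = t.
  apply: IVT => //; first exact: p_continuous.
  by rewrite p1 ge_min le_max tpx t0 orbT.
move: cI; rewrite in_itv/= => /andP[xc c1].
have : [set y | 0 <= y <= 1 /\ phi y = t%:E] (psi t).
  apply: xgetPex; exists c; split; first by rewrite (le_trans (ltW x0) xc).
  by rewrite phiE ?pc // (lt_le_trans x0 xc).
case=> /andP[y0 y1] phiy.
have y_gt0 : 0 < psi t.
  by rewrite lt_def y0 andbT; apply: contra_eqN phiy => /eqP->; rewrite phi0.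
by move: phiy; rewrite phiE // => -[]; rewrite y_gt0 y1.
Qed.

Lemma phi_inv_phi x : 0 <= x <= 1 -> phi_inv phi (phi x) = x.
Proof.
case/andP; rewrite le_eqVlt => /predU1P[<-|x0 x1]; first by rewrite phi0 phi_inv_oo.
have x01 : 0 < x <= 1 by rewrite x0 x1.
have [psi01 p_psi] := psiP (p_ge0 x01).
by rewrite phiE //; exact: p_inj psi01 x01 p_psi.
Qed.

Lemma psi_in01 t : 0 < t -> 0 < psi t < 1.
Proof.
move=> t0; have [/andP[psi_gt0 psi_le1] p_psi] := psiP (ltW t0).
rewrite psi_gt0 lt_neqAle psi_le1 andbT; apply: contra_eqN p_psi => /eqP->.
by rewrite p1 lt_eqF.
Qed.

Lemma psi0 : psi 0 = 1.
Proof. by have := @phi_inv_phi 1; rewrite ler01 lexx phiE ?ltr01 // p1; apply. Qed.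

Lemma psi_derive t : 0 < t -> is_derive t 1 psi (- G (psi t)).
Proof.
move=> t0; have /andP[x0 x1] := psi_in01 t0; have [_ p_psi] := psiP (ltW t0).
set x := psi t in x0 x1 p_psi *.
have x01 : x \in `]0, 1[ by rewrite in_itv/= x0 x1.
have near01 := near_in_itvoo x01.
have p_psiK : {near x, cancel p psi}.
  near=> y; have : y \in `]0, 1[ by near: y.
  by rewrite in_itv/= => /andP[y0 y1]; rewrite /psi -phiE // phi_inv_phi // !ltW.
have p_cont : {near x, continuous p}.
  near=> y; have : y \in `]0, 1[ by near: y.
  by rewrite in_itv/= => /andP[y0 _]; exact: is_derive_continuous (p_derive y0).
have dpx_neq0 : dp x != 0 by rewrite lt_eqF // dp_lt0 // x0 x1.
have := is_derive_inverse p_psiK p_cont (p_derive x0) dpx_neq0.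
by rewrite p_psi GE ?x0 // opprK.
Unshelve. all: by end_near.
Qed.

Lemma signed_monotone_psi n : signed_monotone (fun x => 0 < x) (-1) n psi.
Proof.
have psi_ge0 t : 0 < t -> 0 <= psi t by move=> t0; case: (psiP (ltW t0)) => /andP[/ltW].
elim: n => [|n IH]; (split; first exact: psi_ge0) => //.
exists (fun t => - G (psi t)) => [t t0|]; first exact: psi_derive.
have -> : (fun t => -1 * - G (psi t)) = G \o psi by apply: funext => t; rewrite mulN1r opprK.
exact: signed_monotone_comp psi_in01 (G_abs_monotone _) IH.
Qed.

Lemma psi_cvg0 : psi t @[t --> 0^'+] --> psi 0.
Proof.
rewrite psi0; apply/cvgrPdist_le => e e0.
pose e' := Num.min e (1 / 2).
have e'0 : 0 < e' by rewrite lt_min e0 divr_gt0 ?ltr01 ?ltr0n.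
have e'_le : e' <= 1 / 2 by rewrite ge_min lexx orbT.
have y0 : 0 < 1 - e'.
  by rewrite subr_gt0 (le_lt_trans e'_le) // ltr_pdivrMr ?ltr0n // mul1r ltr1n.
have y1 : 1 - e' < 1 by rewrite ltrBlDr ltrDl.
(* For [0 < t < p (1 - e')], monotonicity of [p] gives [1 - e' <= psi t <= 1]. *)
near=> t.
have t0 : 0 < t by near: t; exact: nbhs_right_gt.
have t_lt : t < p (1 - e') by near: t; apply: nbhs_right_lt; rewrite -p1 p_decreasing.
have [/andP[psi_gt0 psi_le1] p_psi] := psiP (ltW t0).
have y_le : 1 - e' <= psi t.
  rewrite leNgt; apply/negP => psi_lt.
  have := p_decreasing psi_gt0 psi_lt (ltW y1).
  by rewrite p_psi => /(lt_trans t_lt); rewrite ltxx.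
have : e' <= e by rewrite ge_min lexx.
by rewrite ger0_norm ?subr_ge0 //; move: y_le; lra.
Unshelve. all: by end_near.
Qed.

Lemma cmonotone_psi n : cmonotone n psi.
Proof. by split; [exact: signed_monotone_psi | rewrite psi0 | exact: psi_cvg0]. Qed.

Lemma phi_ge0 x : 0 <= x <= 1 -> (0 <= phi x)%E.
Proof.
case/andP; rewrite le_eqVlt => /predU1P[<-|x0 x1]; first by rewrite phi0 leey.
by rewrite phiE // lee_fin p_ge0 // x0 x1.
Qed.

Lemma sum_phi_oo d (u : 'I_d -> R) i : in_unit_cube u -> phi (u i) = +oo%E ->
  (\sum_(j < d) phi (u j))%E = +oo%E.
Proof.
move=> u01 phi_ui; rewrite (bigD1 i) //= phi_ui addye //.
have : (0 <= \sum_(j < d | j != i) phi (u j))%E by apply: sume_ge0 => j _; apply: phi_ge0.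
by case: (\sum_(j < d | j != i) phi (u j))%E.
Qed.

Lemma archC_grounded d (u : 'I_d -> R) :
  in_unit_cube u -> (exists i, u i = 0) -> archC phi u = 0.
Proof.
by move=> u01 [i ui0]; rewrite /archC (@sum_phi_oo _ _ i) ?ui0 // phi_inv_oo.
Qed.

Lemma archC_margin d (u : 'I_d -> R) i :
  in_unit_cube u -> (forall j, j != i -> u j = 1) -> archC phi u = u i.
Proof.
move=> u01 u1; rewrite /archC (bigD1 i) //= big1 ?adde0; first exact: phi_inv_phi.
by move=> j ji; rewrite u1 // phiE ?ltr01 // p1.
Qed.

(* In the coordinates [t_i = p (u_i)], the vertices of a box are the points
   [z + \sum_(i in T) h i]; a coordinate [a_i = 0] is at infinity. *)
Lemma archC_box_vertex d (a b : 'I_d -> R) (T : {set 'I_d}) :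
  in_unit_cube a -> (forall i, 0 < b i <= 1) ->
  archC phi (fun i => if i \in T then a i else b i) =
  box_vertex psi [set i | a i == 0]%SET (fun i => if a i == 0 then 0 else p (a i) - p (b i))
    (\sum_i p (b i)) T.
Proof.
move=> a01 b01; set c := fun i => _.
have c01 : in_unit_cube c.
  by move=> i; rewrite /c; case: ifP => _; [exact: a01 | case/andP: (b01 i) => /ltW ->].
rewrite /box_vertex; case: ifP => [TB|/negbT].
  have c_gt0 i : 0 < c i.
    rewrite /c; case: ifPn => iT; last by case/andP: (b01 i).
    have /andP[a0 _] := a01 i; rewrite lt_def a0 andbT.
    by have := disjointFr TB iT; rewrite inE => /negbT.
  rewrite /archC (eq_bigr (fun i => (p (c i))%:E)) => [|i _]; last exact/phiE/c_gt0.
  rewrite sumEFin /psi [X in _ + X]big_mkcond -big_split /=; congr (phi_inv phi _%:E).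
  apply: eq_bigr => i _; rewrite /c; case: ifPn => iT; last by rewrite addr0.
  by have := disjointFr TB iT; rewrite inE => ->; rewrite addrC subrK.
rewrite -setI_eq0 => /set0Pn[i]; rewrite inE => /andP[iT /[1!inE] /eqP ai0].
by apply: archC_grounded c01 _; exists i; rewrite /c iT.
Qed.

Lemma archC_cvolume_ge0 d (a b : 'I_d -> R) : in_unit_cube a -> in_unit_cube b ->
  (forall i, a i <= b i) -> 0 <= cvolume (archC phi (d := d)) a b.
Proof.
move=> a01 b01 ab.
have [[i bi0]|b_neq0] := pselect (exists i, b i = 0).
  rewrite /cvolume big1 // => S _; rewrite archC_grounded ?mulr0 //.
    by move=> j; case: ifP => _; [exact: b01 | exact: a01].
  exists i; case: ifP => // _; apply/eqP; rewrite eq_le -{1}bi0 ab.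
  by case/andP: (a01 i) => ->.
have b_gt0 i : 0 < b i <= 1.
  have /andP[b0 ->] := b01 i; rewrite andbT lt_def b0 andbT.
  by apply/eqP => bi0; apply: b_neq0; exists i.
have h_ge0 i : 0 <= if a i == 0 then 0 else p (a i) - p (b i).
  case: eqP => // /eqP ai0; have /andP[a0 _] := a01 i; have /andP[_ b1] := b01 i.
  rewrite subr_ge0; case: (ltgtP (a i) (b i)) (ab i) => [aib _|//|-> _//].
  by rewrite ltW // p_decreasing // lt_def ai0.
have z_ge0 : 0 <= \sum_i p (b i) by apply: sumr_ge0 => i _; apply/p_ge0/b_gt0.
have := cmonotone_alternating_sum_ge0 (A := [set: 'I_d]%SET) [set i | a i == 0]%SET
  h_ge0 z_ge0 (cmonotone_psi _).
rewrite (eq_bigl xpredT) => [|T]; last by rewrite finset.subsetT.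
move/le_trans; apply; rewrite /cvolume (reindex_inj (@finset.setC_inj 'I_d)) /=.
rewrite le_eqVlt; apply/predU1P; left; apply: eq_bigr => T _; rewrite -archC_box_vertex //.
have -> : #|~: T| = (d - #|T|)%N by have := cardsC T; rewrite card_ord; lia.
by congr (_ * archC phi _); apply: funext => i; rewrite finset.in_setC; case: (i \in T).
Qed.

Lemma archC_copula d : is_copula (archC phi (d := d)).
Proof. by split; [exact: archC_grounded | exact: archC_margin | exact: archC_cvolume_ge0]. Qed.

End Generator.

Section Examples.
Variable R : realType.
Implicit Types x t : R.

Lemma abs_monotone_id n : signed_monotone (fun x : R => 0 < x < 1) 1 n id.
Proof. by apply: signed_monotone_id => x /andP[/ltW]. Qed.

Lemma abs_monotone_inv1B n :
  signed_monotone (fun x : R => 0 < x < 1) 1 n (fun x => (1 - x)^-1).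
Proof.
have inv1B_ge0 x : 0 < x < 1 -> 0 <= (1 - x)^-1.
  by case/andP=> _ x1; rewrite invr_ge0 subr_ge0 ltW.
elim: n => [|n IH]; (split; first exact: inv1B_ge0) => //.
exists (fun x => (1 - x)^-1 * (1 - x)^-1) => [x /andP[_ x1]|].
  have x1_neq0 : 1 - x != 0 by rewrite subr_eq0 gt_eqF.
  have d1B : is_derive x 1 (fun y : R => 1 - y) (0 - 1).
    exact: is_deriveB (@is_derive_cst R R R 1 x 1) (is_derive_id x 1).
  have := @is_deriveV R (fun y => 1 - y) x _ 1 x1_neq0 d1B.
  by rewrite /GRing.scale /= sub0r mulrN1 opprK expr2 invfM.
have -> : (fun x => 1 * ((1 - x)^-1 * (1 - x)^-1)) = (fun x : R => (1 - x)^-1 * (1 - x)^-1).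
  by apply: funext => x; rewrite mul1r.
exact: signed_monotoneM.
Qed.

Lemma is_copula_phi_m1 d : is_copula (archC (@phi_m1 R) (d := d)).
Proof.
apply: (archC_copula (p := fun x => x - 1 - ln x) (dp := fun x => 1 - x^-1)
  (G := fun x => x * (1 - x)^-1)).
- by rewrite /phi_m1 eqxx.
- by move=> x x0; rewrite /phi_m1 gt_eqF.
- by rewrite ln1 subrr subr0.
- move=> x x0; have dB1 : is_derive x 1 (fun y : R => y - 1) (1 - 0).
    exact: is_deriveB (is_derive_id x 1) (@is_derive_cst R R R 1 x 1).
  by have := is_deriveB dB1 (is_derive1_ln x0); rewrite subr0.
- by move=> x /andP[x0 x1]; rewrite subr_lt0 invf_gt1.
- move=> t t0; exists (expR (- (t + 1))).
    by rewrite expR_gt0 expR_le1 oppr_le0 addr_ge0.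
  by rewrite expRK; have := expR_gt0 (- (t + 1)); lra.
- move=> x /andP[x0 x1].
  have x1B_neq0 : 1 - x != 0 by rewrite subr_eq0 gt_eqF.
  by field; rewrite gt_eqF // x1B_neq0 andbT subr_eq0 lt_eqF.
- by move=> n; apply: signed_monotoneM (abs_monotone_id n) (abs_monotone_inv1B n).
Qed.

Lemma is_copula_phi_m2 d : is_copula (archC (@phi_m2 R) (d := d)).
Proof.
apply: (archC_copula (p := fun x => (x^-1 + x - 2) / 2) (dp := fun x => (1 - (x ^+ 2)^-1) / 2)
  (G := fun x => 2 * (x * x * (1 - x * x)^-1))).
- by rewrite /phi_m2 eqxx.
- by move=> x x0; rewrite /phi_m2 gt_eqF.
- by rewrite invr1; lra.
- move=> x x0; have x_neq0 : x != 0 by rewrite gt_eqF.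
  have dV := @is_deriveV R id x 1 1 x_neq0 (is_derive_id x 1).
  have dVD := is_deriveD dV (is_derive_id x 1).
  have dVDB := is_deriveB dVD (@is_derive_cst R R R 2 x 1).
  have := is_deriveM dVDB (@is_derive_cst R R R 2^-1 x 1).
  by rewrite /GRing.scale /=; congr is_derive; field.
- move=> x /andP[x0 x1].
  rewrite pmulr_llt0 ?invr_gt0 ?ltr0n // subr_lt0 invf_gt1 ?exprn_gt0 //.
  by rewrite expr2; nra.
- move=> t t0; have t23 : 0 < 2 * t + 3 by lra.
  exists (2 * t + 3)^-1; first by rewrite invr_gt0 t23 invf_le1 //; lra.
  by rewrite invrK; have := invr_gt0 (2 * t + 3); rewrite t23; lra.
- move=> x /andP[x0 x1].
  have x2_neq1 : 1 - x * x != 0 by rewrite subr_eq0 gt_eqF //; nra.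
  by field; rewrite gt_eqF // x2_neq1 andbT expr2 -oppr_eq0 opprB.
- move=> n; have sq := signed_monotoneM (abs_monotone_id n) (abs_monotone_id n).
  have inv1Bsq : signed_monotone (fun x : R => 0 < x < 1) 1 n (fun x => (1 - x * x)^-1).
    apply: signed_monotone_comp (abs_monotone_inv1B n) sq.
    by move=> x /andP[x0 x1]; rewrite mulr_gt0 //=; nra.
  exact: signed_monotoneM (signed_monotone_cst _ _ _ (ler0n _ 2))
    (signed_monotoneM sq inv1Bsq).
Qed.

End Examples.

Theorem theorem7 (R : realType) (d : nat) :
  (3 <= d)%N ->
  @is_copula R d (@archC R (@phi_m1 R) d) /\ @is_copula R d (@archC R (@phi_m2 R) d).
Proof. by move=> _; split; [exact: is_copula_phi_m1 | exact: is_copula_phi_m2]. Qed.
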